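(* Let $Q:\mathcal{P}(S)^{\mathrm{op}}\to\Lambda$ be an $S$-cube in the cyclic category. The following are equivalent: (1) $Q$ is strongly Cartesian; (2) there is a strongly Cartesian $S$-cube in $\Delta$ whose image under the canonical functor $\Delta\to\Lambda$ is $Q$; (3) every $S$-cube $Q'$ in $\Delta$ whose image under $\Delta\to\Lambda$ is $Q$ is strongly Cartesian.
   Context: $\Delta$: simplex category; $\Lambda$: Connes' cyclic category; the canonical functor $\Delta\to\Lambda$, $[n]\mapsto\langle n\rangle=(\mathbb{Z}/(n+1),+1)$, identifies $\Delta$ with the slice category $\Lambda_{/\langle0\rangle}$ and is the forgetful functor $\Lambda_{/\langle0\rangle}\to\Lambda$. $\mathcal{P}(S)$ is the subset poset of a finite set $S$. An $S$-cube $Q:\mathcal{P}(S)^{\mathrm{op}}\to\mathcal{D}$ is strongly Cartesian if each square $Q(T\cup\{s,s'\})\to Q(T\cup\{s\}),Q(T\cup\{s'\})\to Q(T)$ ($T\subseteq S$, $s\neq s'\in S\setminus T$) is a pullback in $\mathcal{D}$. *)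

From mathcomp Require Import all_boot.
From Stdlib Require Import ZArith.

Set Implicit Arguments.
Unset Strict Implicit.
Unset Printing Implicit Defensive.

(* A minimal notion of (concrete) category: morphisms are raw data     *)
(* together with a validity predicate [ishom] and an equality [heq].   *)
Record Cat := Cat_ {
  ob : Type;
  hom : ob -> ob -> Type;
  ishom : forall a b : ob, hom a b -> Prop;
  heq : forall a b : ob, hom a b -> hom a b -> Prop;
  cid : forall a : ob, hom a a;
  ccomp : forall a b c : ob, hom b c -> hom a b -> hom a c }.

Arguments ishom {c a b} _ : rename.
Arguments heq {c a b} _ _ : rename.
Arguments cid {c} a : rename.
Arguments ccomp {c a b c0} _ _ : rename.

(* Connes' cyclic category Lambda.  The object <n> = (Z/(n+1), +1) is  *)
(* represented by n : nat.  A morphism <m> -> <n> is represented by a  *)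
(* non-decreasing f : Z -> Z with f (i + (m+1)) = f i + (n+1); two     *)
(* such represent the same morphism iff they differ by a multiple of   *)
(* n+1 (Lambda = Lambda_infty / BZ).                                   *)
Definition lam_ishom (m n : nat) (f : Z -> Z) : Prop :=
  (forall i j : Z, (i <= j)%Z -> (f i <= f j)%Z) /\
  (forall i : Z, f (i + Z.of_nat (S m))%Z = (f i + Z.of_nat (S n))%Z).

Definition lam_heq (m n : nat) (f g : Z -> Z) : Prop :=
  exists k : Z, forall i : Z, f i = (g i + k * Z.of_nat (S n))%Z.

Definition Lam : Cat :=
  @Cat_ nat (fun _ _ => Z -> Z) lam_ishom lam_heq
        (fun _ => fun i => i) (fun _ _ _ g f => fun i => g (f i)).

(* The simplex category Delta: object [n] = {0,...,n} is n : nat; a    *)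
(* morphism [m] -> [n] is a map Z -> Z whose restriction to [0,m] is   *)
(* non-decreasing with values in [0,n]; equality = equality on [0,m].  *)
Definition del_ishom (m n : nat) (f : Z -> Z) : Prop :=
  (forall i j : Z, (0 <= i)%Z -> (i <= j)%Z -> (j <= Z.of_nat m)%Z ->
     (f i <= f j)%Z) /\
  (forall i : Z, (0 <= i <= Z.of_nat m)%Z -> (0 <= f i <= Z.of_nat n)%Z).

Definition del_heq (m n : nat) (f g : Z -> Z) : Prop :=
  forall i : Z, (0 <= i <= Z.of_nat m)%Z -> f i = g i.

Definition Del : Cat :=
  @Cat_ nat (fun _ _ => Z -> Z) del_ishom del_heq
        (fun _ => fun i => i) (fun _ _ _ g f => fun i => g (f i)).

(* The canonical functor Delta -> Lambda: [n] |-> <n>, and a monotone  *)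
(* f : [m] -> [n] is extended (m+1 |-> n+1)-equivariantly to Z.        *)
Definition del_to_lam (m n : nat) (f : Z -> Z) : Z -> Z :=
  fun i => (f (i mod Z.of_nat (S m)) + (i / Z.of_nat (S m)) * Z.of_nat (S n))%Z.

(* S-cubes P(S)^op -> C: an object for each T, and a morphism          *)
(* Q(T') -> Q(T) for each T \subset T' (values for other pairs are      *)
(* irrelevant), subject to the functor laws.                           *)
Record cube (C : Cat) (S : finType) := Cube {
  cobj : {set S} -> ob C;
  cmap : forall T T' : {set S}, hom (cobj T') (cobj T) }.

Arguments cobj {C S} _ _.
Arguments cmap {C S} _ _ _.

Definition is_cube (C : Cat) (S : finType) (Q : cube C S) : Prop :=
  (forall T T' : {set S}, T \subset T' -> ishom (cmap Q T T')) /\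
  (forall T : {set S}, heq (cmap Q T T) (cid (cobj Q T))) /\
  (forall T1 T2 T3 : {set S}, T1 \subset T2 -> T2 \subset T3 ->
     heq (cmap Q T1 T3) (ccomp (cmap Q T1 T2) (cmap Q T2 T3))).

Definition is_pullback (C : Cat) (P A B D : ob C)
    (p1 : hom P A) (p2 : hom P B) (f : hom A D) (g : hom B D) : Prop :=
  ishom p1 /\ ishom p2 /\ ishom f /\ ishom g /\
  heq (ccomp f p1) (ccomp g p2) /\
  forall (X : ob C) (x1 : hom X A) (x2 : hom X B),
    ishom x1 -> ishom x2 -> heq (ccomp f x1) (ccomp g x2) ->
    (exists u : hom X P, ishom u /\ heq (ccomp p1 u) x1 /\ heq (ccomp p2 u) x2) /\
    (forall u v : hom X P, ishom u -> ishom v ->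
       heq (ccomp p1 u) x1 -> heq (ccomp p2 u) x2 ->
       heq (ccomp p1 v) x1 -> heq (ccomp p2 v) x2 -> heq u v).

Definition strongly_cartesian (C : Cat) (S : finType) (Q : cube C S) : Prop :=
  forall (T : {set S}) (s s' : S), s != s' -> s \notin T -> s' \notin T ->
    is_pullback (cmap Q (s |: T) (s |: (s' |: T)))
                (cmap Q (s' |: T) (s |: (s' |: T)))
                (cmap Q T (s |: T))
                (cmap Q T (s' |: T)).

Definition lam_image (S : finType) (Q : cube Del S) : cube Lam S :=
  @Cube Lam S (cobj Q)
        (fun T T' => del_to_lam (cobj Q T') (cobj Q T) (cmap Q T T')).

Definition nat_iso (C : Cat) (S : finType) (Q1 Q2 : cube C S) : Prop :=
  exists (a : forall T, hom (cobj Q1 T) (cobj Q2 T))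
         (b : forall T, hom (cobj Q2 T) (cobj Q1 T)),
    forall T : {set S},
      ishom (a T) /\ ishom (b T) /\
      heq (ccomp (a T) (b T)) (cid (cobj Q2 T)) /\
      heq (ccomp (b T) (a T)) (cid (cobj Q1 T)) /\
      (forall T' : {set S}, T \subset T' ->
         heq (ccomp (a T) (cmap Q1 T T')) (ccomp (cmap Q2 T T') (a T'))).

(* The functor Delta -> Lambda identifies Delta with the slice Lambda over <0>: a
   morphism of Lambda comes from Delta exactly when it commutes with the projections
   i |-> i / (n+1) to <0>, and then its lift is unique.  Every morphism <m> -> <0> is
   such a projection precomposed with a rotation of <m>, so any Lambda-cone over a
   Delta-cospan can be rotated into one lying over <0>; hence Delta -> Lambda preserves
   and reflects pullbacks of Delta-squares.  A cube in Lambda lies over its terminal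
   vertex Q(emptyset); rotating every vertex makes it lie over <0>, so it lifts to a
   cube in Delta.  Any lift is naturally isomorphic in Lambda to Q, and pullbacks in
   Lambda are invariant under natural isomorphism of squares. *)

From mathcomp Require Import all_boot.
From Stdlib Require Import ZArith Lia Setoid ClassicalEpsilon.

Set Implicit Arguments.
Unset Strict Implicit.
Unset Printing Implicit Defensive.

Local Open Scope Z_scope.

Local Notation modulus n := (Z.of_nat (S n)).

Lemma equivariant_mul (M N : Z) (f : Z -> Z) :
  (forall i, f (i + M) = f i + N) -> forall z i, f (i + z * M) = f i + z * N.
Proof.
move=> fM; elim/Z.peano_ind => [|z IH|z IH] i.
- by rewrite !Z.mul_0_l !Z.add_0_r.
- by rewrite Z.mul_succ_l Z.add_assoc fM IH; lia.
- have := fM (i + Z.pred z * M).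
  rewrite (_ : i + Z.pred z * M + M = i + z * M); last lia.
  rewrite IH; lia.
Qed.

Lemma div_add_mul_small (a q M : Z) : 0 <= a < M -> (a + q * M) / M = q.
Proof. by move=> a_bnd; rewrite Z.div_add ?Z.div_small; lia. Qed.

Lemma mod_add_mul_small (a q M : Z) : 0 <= a < M -> (a + q * M) mod M = a.
Proof. by move=> a_bnd; rewrite Z.mod_add ?Z.mod_small; lia. Qed.

Lemma eq_of_congr_bounded (n : nat) (a b k : Z) :
  0 <= a <= Z.of_nat n -> 0 <= b <= Z.of_nat n -> a = b + k * modulus n -> a = b.
Proof.
move=> a_bnd b_bnd a_eq.
have : a / modulus n = k by rewrite a_eq div_add_mul_small; lia.
by rewrite Z.div_small; lia.
Qed.

Lemma exists_first_jump (f : Z -> Z) (t : nat) :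
  f 0 < f (Z.of_nat t) -> exists r, f (r - 1) <= f 0 < f r.
Proof.
elim: t => [|t IH] jump; first by move: jump => /=; lia.
case: (Z_lt_le_dec (f 0) (f (Z.of_nat t))) => [|le_t]; first exact: IH.
by exists (Z.of_nat t.+1); rewrite (_ : Z.of_nat t.+1 - 1 = Z.of_nat t); lia.
Qed.

Definition shift (c : Z) : Z -> Z := fun i => i + c.

#[local] Instance lam_heq_equiv m n : Equivalence (lam_heq m n).
Proof.
constructor=> [f | f g [k fg] | f g h [k fg] [l gh]]; first by exists 0; lia.
- by exists (- k) => i; rewrite fg; lia.
- by exists (k + l) => i; rewrite fg gh; lia.
Qed.

Section LambdaMorphisms.
Variables m n p : nat.

Lemma lam_heq_ext (f g : Z -> Z) : f =1 g -> lam_heq m n f g.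
Proof. by move=> fg; exists 0 => i; rewrite fg; lia. Qed.

Lemma lam_heq_compr (h g g' : Z -> Z) :
  lam_heq n p g g' -> lam_heq m p (g \o h) (g' \o h).
Proof. by case=> k gg'; exists k => i; exact: gg'. Qed.

Lemma lam_heq_compl (g f f' : Z -> Z) :
  lam_ishom n p g -> lam_heq m n f f' -> lam_heq m p (g \o f) (g \o f').
Proof. by case=> _ gN [k ff']; exists k => i /=; rewrite ff' (equivariant_mul gN). Qed.

Lemma lam_ishom_comp (g f : Z -> Z) :
  lam_ishom n p g -> lam_ishom m n f -> lam_ishom m p (g \o f).
Proof.
case=> g_mono gN [f_mono fN]; split=> [i j le_ij | i] /=; first exact/g_mono/f_mono.
by rewrite fN gN.
Qed.

Lemma lam_ishom_shift c : lam_ishom m m (shift c).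
Proof. by split=> [i j|i]; rewrite /shift; lia. Qed.

End LambdaMorphisms.

(** * Isomorphism invariance of pullbacks in Lambda *)

Definition lam_iso (m n : nat) (a b : Z -> Z) : Prop :=
  [/\ lam_ishom m n a, lam_ishom n m b, lam_heq n n (a \o b) id & lam_heq m m (b \o a) id].

Lemma lam_iso_sym m n a b : lam_iso m n a b -> lam_iso n m b a.
Proof. by case. Qed.

Lemma lam_iso_shift m c : lam_iso m m (shift c) (shift (- c)).
Proof. by split; try apply: lam_ishom_shift; apply: lam_heq_ext => i; rewrite /shift /=; lia. Qed.

Section LambdaIsomorphisms.
Variables (X X' Y Y' : nat) (aX bX aY bY : Z -> Z).
Hypotheses (isoX : lam_iso X X' aX bX) (isoY : lam_iso Y Y' aY bY).

Lemma lam_heq_cancel_isol k (u v : Z -> Z) :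
  lam_heq k Y' (aY \o u) (aY \o v) -> lam_heq k Y u v.
Proof.
case: isoY => _ bY_hom _ baY uv.
transitivity (bY \o (aY \o u)); first exact (symmetry (lam_heq_compr _ u baY)).
transitivity (bY \o (aY \o v)); first exact (lam_heq_compl bY_hom uv).
exact (lam_heq_compr _ v baY).
Qed.

Lemma lam_heq_cancel_isor k (u v : Z -> Z) :
  lam_ishom X' k u -> lam_ishom X' k v -> lam_heq X k (u \o aX) (v \o aX) -> lam_heq X' k u v.
Proof.
case: isoX => _ _ abX _ u_hom v_hom uv.
transitivity ((u \o aX) \o bX); first exact (symmetry (lam_heq_compl u_hom abX)).
transitivity ((v \o aX) \o bX); first exact (lam_heq_compr _ bX uv).
exact (lam_heq_compl v_hom abX).
Qed.

Lemma lam_natural_conj (h h' : Z -> Z) :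
  lam_ishom X' Y' h' -> lam_heq X Y' (aY \o h) (h' \o aX) -> lam_heq X' Y' (aY \o h \o bX) h'.
Proof.
case: isoX => _ _ abX _ h'_hom nat_h.
transitivity ((h' \o aX) \o bX); first exact (lam_heq_compr _ bX nat_h).
exact (lam_heq_compl h'_hom abX).
Qed.

Lemma lam_natural_inv (h h' : Z -> Z) :
  lam_ishom X' Y' h' -> lam_heq X Y' (aY \o h) (h' \o aX) -> lam_heq X' Y (bY \o h') (h \o bX).
Proof.
move=> h'_hom nat_h; apply: lam_heq_cancel_isol.
transitivity h'; last exact (symmetry (lam_natural_conj h'_hom nat_h)).
by case: isoY => _ _ abY _; exact (lam_heq_compr _ h' abY).
Qed.

Lemma lam_natural_comp Z' (aZ h h' l l' : Z -> Z) :
  lam_ishom Y' Z' l' -> lam_heq X Y' (aY \o h) (h' \o aX) ->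
  lam_heq Y Z' (aZ \o l) (l' \o aY) -> lam_heq X Z' (aZ \o (l \o h)) ((l' \o h') \o aX).
Proof.
move=> l'_hom nat_h nat_l.
transitivity (l' \o (aY \o h)); first exact (lam_heq_compr _ h nat_l).
exact (lam_heq_compl l'_hom nat_h).
Qed.

Lemma lam_natural_image k (h h' u x : Z -> Z) :
  lam_heq X Y' (aY \o h) (h' \o aX) -> lam_heq k Y (h \o u) (bY \o x) ->
  lam_heq k Y' (h' \o (aX \o u)) x.
Proof.
case: isoY => aY_hom _ abY _ nat_h hu.
transitivity (aY \o (h \o u)); first exact (symmetry (lam_heq_compr _ u nat_h)).
transitivity (aY \o (bY \o x)); first exact (lam_heq_compl aY_hom hu).
exact (lam_heq_compr _ x abY).
Qed.

Lemma lam_natural_preimage k (h h' w x : Z -> Z) :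
  lam_ishom X' Y' h' -> lam_heq X Y' (aY \o h) (h' \o aX) ->
  lam_heq k Y' (h' \o w) x -> lam_heq k Y (h \o (bX \o w)) (bY \o x).
Proof.
case: isoY => _ bY_hom _ _ h'_hom nat_h hw.
transitivity (bY \o (h' \o w)); last exact (lam_heq_compl bY_hom hw).
exact (symmetry (lam_heq_compr _ w (lam_natural_inv h'_hom nat_h))).
Qed.

End LambdaIsomorphisms.

Definition unique_factorization (C : Cat) (P A B X : ob C) (p1 : hom P A) (p2 : hom P B)
    (x1 : hom X A) (x2 : hom X B) : Prop :=
  (exists u : hom X P, ishom u /\ heq (ccomp p1 u) x1 /\ heq (ccomp p2 u) x2) /\
  (forall u v : hom X P, ishom u -> ishom v ->
     heq (ccomp p1 u) x1 -> heq (ccomp p2 u) x2 ->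
     heq (ccomp p1 v) x1 -> heq (ccomp p2 v) x2 -> heq u v).

Lemma is_pullbackE (C : Cat) (P A B D : ob C)
    (p1 : hom P A) (p2 : hom P B) (f : hom A D) (g : hom B D) :
  is_pullback p1 p2 f g <->
  [/\ ishom p1, ishom p2, ishom f, ishom g & heq (ccomp f p1) (ccomp g p2)] /\
  (forall X (x1 : hom X A) (x2 : hom X B), ishom x1 -> ishom x2 ->
     heq (ccomp f x1) (ccomp g x2) -> unique_factorization p1 p2 x1 x2).
Proof.
split=> [[? [? [? [? [? univ]]]]] | [[? ? ? ? ?] univ]]; first by split.
by do 5 (split; first done).
Qed.

Section PullbackTransport.
Variables (P A B D P' A' B' D' : nat).
Variables (p1 p2 f g p1' p2' f' g' aP bP aA bA aB bB aD bD : Z -> Z).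
Hypotheses (isoP : lam_iso P P' aP bP) (isoA : lam_iso A A' aA bA)
  (isoB : lam_iso B B' aB bB) (isoD : lam_iso D D' aD bD).
Hypotheses (p1'_hom : lam_ishom P' A' p1') (p2'_hom : lam_ishom P' B' p2')
  (f'_hom : lam_ishom A' D' f') (g'_hom : lam_ishom B' D' g').
Hypotheses (p1_nat : lam_heq P A' (aA \o p1) (p1' \o aP))
  (p2_nat : lam_heq P B' (aB \o p2) (p2' \o aP))
  (f_nat : lam_heq A D' (aD \o f) (f' \o aA))
  (g_nat : lam_heq B D' (aD \o g) (g' \o aB)).

Lemma lam_transport_commutes :
  lam_heq P D (f \o p1) (g \o p2) -> lam_heq P' D' (f' \o p1') (g' \o p2').
Proof.
have [aD_hom _ _ _] := isoD; move=> comm.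
apply: (lam_heq_cancel_isor isoP (lam_ishom_comp f'_hom p1'_hom) (lam_ishom_comp g'_hom p2'_hom)).
transitivity (aD \o (f \o p1)); first exact (symmetry (lam_natural_comp f'_hom p1_nat f_nat)).
transitivity (aD \o (g \o p2)); first exact (lam_heq_compl aD_hom comm).
exact (lam_natural_comp g'_hom p2_nat g_nat).
Qed.

Lemma lam_transport_cone X (x1 x2 : Z -> Z) :
  lam_heq X D' (f' \o x1) (g' \o x2) -> lam_heq X D (f \o (bA \o x1)) (g \o (bB \o x2)).
Proof.
move=> comm; apply: (lam_heq_cancel_isol isoD).
transitivity (f' \o x1); first exact (lam_heq_compr _ x1 (lam_natural_conj isoA f'_hom f_nat)).
transitivity (g' \o x2); first exact comm.
exact (symmetry (lam_heq_compr _ x2 (lam_natural_conj isoB g'_hom g_nat))).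
Qed.

Lemma lam_transport_factorization X (x1 x2 : Z -> Z) :
  @unique_factorization Lam P A B X p1 p2 (bA \o x1) (bB \o x2) ->
  @unique_factorization Lam P' A' B' X p1' p2' x1 x2.
Proof.
have [aP_hom _ _ _] := isoP.
move=> [[u [u_hom [u1 u2]]] uniq]; split.
  exists (aP \o u); split; first exact: (lam_ishom_comp aP_hom u_hom).
  split; [exact (lam_natural_image isoA p1_nat u1) | exact (lam_natural_image isoB p2_nat u2)].
move=> v w v_hom w_hom v1 v2 w1 w2; apply: (lam_heq_cancel_isol (lam_iso_sym isoP)).
have [_ bP_hom _ _] := isoP.
apply: uniq; try exact: (lam_ishom_comp bP_hom).
- exact (lam_natural_preimage isoP isoA p1'_hom p1_nat v1).
- exact (lam_natural_preimage isoP isoB p2'_hom p2_nat v2).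
- exact (lam_natural_preimage isoP isoA p1'_hom p1_nat w1).
- exact (lam_natural_preimage isoP isoB p2'_hom p2_nat w2).
Qed.

Lemma lam_pullback_transport :
  @is_pullback Lam P A B D p1 p2 f g -> @is_pullback Lam P' A' B' D' p1' p2' f' g'.
Proof.
case/is_pullbackE=> [[_ _ _ _ comm] univ]; apply/is_pullbackE; split.
  by split=> //; exact: lam_transport_commutes.
move=> X x1 x2 x1_hom x2_hom comm'.
have [_ bA_hom _ _] := isoA; have [_ bB_hom _ _] := isoB.
apply: lam_transport_factorization; apply: univ.
- exact: lam_ishom_comp bA_hom x1_hom.
- exact: lam_ishom_comp bB_hom x2_hom.
- exact: lam_transport_cone.
Qed.

End PullbackTransport.

Lemma lam_pullback_iso_iff (P A B D P' A' B' D' : nat)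
    (p1 p2 f g p1' p2' f' g' aP bP aA bA aB bB aD bD : Z -> Z) :
  lam_iso P P' aP bP -> lam_iso A A' aA bA -> lam_iso B B' aB bB -> lam_iso D D' aD bD ->
  lam_ishom P A p1 -> lam_ishom P B p2 -> lam_ishom A D f -> lam_ishom B D g ->
  lam_ishom P' A' p1' -> lam_ishom P' B' p2' -> lam_ishom A' D' f' -> lam_ishom B' D' g' ->
  lam_heq P A' (aA \o p1) (p1' \o aP) -> lam_heq P B' (aB \o p2) (p2' \o aP) ->
  lam_heq A D' (aD \o f) (f' \o aA) -> lam_heq B D' (aD \o g) (g' \o aB) ->
  @is_pullback Lam P A B D p1 p2 f g <-> @is_pullback Lam P' A' B' D' p1' p2' f' g'.
Proof.
move=> isoP isoA isoB isoD p1_hom p2_hom f_hom g_hom p1'_hom p2'_hom f'_hom g'_hom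
  p1_nat p2_nat f_nat g_nat.
split; first exact: (lam_pullback_transport isoP isoA isoB isoD p1'_hom p2'_hom f'_hom g'_hom
  p1_nat p2_nat f_nat g_nat).
apply: (lam_pullback_transport (lam_iso_sym isoP) (lam_iso_sym isoA) (lam_iso_sym isoB)
  (lam_iso_sym isoD) p1_hom p2_hom f_hom g_hom).
- exact: (lam_natural_inv isoP isoA p1'_hom p1_nat).
- exact: (lam_natural_inv isoP isoB p2'_hom p2_nat).
- exact: (lam_natural_inv isoA isoD f'_hom f_nat).
- exact: (lam_natural_inv isoB isoD g'_hom g_nat).
Qed.

(** * Delta as the slice of Lambda over <0> *)

Definition lam_proj (n : nat) : Z -> Z := fun i => i / modulus n.

(* [u : <m> -> <n>] lies over <0> for the structure maps [lam_proj]; these are the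
   morphisms of the slice Lambda over <0>, which is equivalent to Delta. *)
Definition over_zero (m n : nat) (u : Z -> Z) : Prop :=
  lam_heq m 0 (lam_proj n \o u) (lam_proj m).

(* Removing the winding of [u] at 0 turns lying over <0> up to a constant into
   [lam_proj n \o u =1 lam_proj m], which forces [u] to map [0, m] into [0, n]. *)
Definition lam_normalize (n : nat) (u : Z -> Z) : Z -> Z :=
  shift (- (u 0 / modulus n * modulus n)) \o u.

Lemma mod_modulus_bound (m : nat) (i : Z) : 0 <= i mod modulus m <= Z.of_nat m.
Proof. have := Z.mod_pos_bound i (modulus m); lia. Qed.

Lemma lam_ishom_proj n : lam_ishom n 0 (lam_proj n).
Proof.
split=> [i j le_ij | i]; first exact: Z.div_le_mono.
by rewrite /lam_proj -[i + _]/(i + 1 * modulus n) Z.div_add; lia.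
Qed.

Section DeltaToLambda.
Variables m n p : nat.

Lemma del_ishom_comp (g f : Z -> Z) :
  del_ishom n p g -> del_ishom m n f -> del_ishom m p (g \o f).
Proof.
move=> [g_mono g_bnd] [f_mono f_bnd]; split=> [i j le0i le_ij lejm | i i_bnd] /=.
  have [fi_bnd fj_bnd] := (f_bnd i ltac:(lia), f_bnd j ltac:(lia)).
  by apply: g_mono; [lia | exact: f_mono | lia].
exact/g_bnd/f_bnd.
Qed.

Lemma del_to_lam_small (f : Z -> Z) i : 0 <= i <= Z.of_nat m -> del_to_lam m n f i = f i.
Proof. by move=> i_bnd; rewrite /del_to_lam Z.mod_small ?Z.div_small; lia. Qed.

Lemma del_to_lam_ishom (f : Z -> Z) : del_ishom m n f -> lam_ishom m n (del_to_lam m n f).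
Proof.
case=> f_mono f_bnd; rewrite /del_to_lam; split=> [i j le_ij | i]; last first.
  by rewrite -[i + _]/(i + 1 * modulus m) Z.mod_add ?Z.div_add; lia.
have [fi_bnd fj_bnd] := (f_bnd _ (mod_modulus_bound m i), f_bnd _ (mod_modulus_bound m j)).
have := Z.div_mod i (modulus m); have := Z.div_mod j (modulus m).
have := mod_modulus_bound m i; have := mod_modulus_bound m j.
have : i / modulus m <= j / modulus m by apply: Z.div_le_mono; lia.
case/Z.le_lteq=> [lt_q | ->] ? ? ? ?.
  have : (i / modulus m + 1) * modulus n <= j / modulus m * modulus n.
    by apply: Z.mul_le_mono_nonneg_r; lia.
  lia.
have := f_mono (i mod modulus m) (j mod modulus m); lia.
Qed.

Lemma del_to_lam_comp (g f : Z -> Z) :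
  del_ishom m n f -> del_to_lam n p g \o del_to_lam m n f =1 del_to_lam m p (g \o f).
Proof.
case=> _ f_bnd i; have fi_bnd := f_bnd _ (mod_modulus_bound m i).
by rewrite /del_to_lam /comp mod_add_mul_small ?div_add_mul_small; lia.
Qed.

Lemma proj_del_to_lam (f : Z -> Z) :
  del_ishom m n f -> lam_proj n \o del_to_lam m n f =1 lam_proj m.
Proof.
case=> _ f_bnd i; have fi_bnd := f_bnd _ (mod_modulus_bound m i).
by rewrite /lam_proj /del_to_lam /comp div_add_mul_small; lia.
Qed.

Lemma del_to_lam_heqE (f f' : Z -> Z) : del_ishom m n f -> del_ishom m n f' ->
  lam_heq m n (del_to_lam m n f) (del_to_lam m n f') <-> del_heq m n f f'.
Proof.
move=> [_ f_bnd] [_ f'_bnd]; split=> [[k ff'] i i_bnd | ff'].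
  have := ff' i; rewrite !del_to_lam_small //.
  exact: eq_of_congr_bounded (f_bnd i i_bnd) (f'_bnd i i_bnd).
by exists 0 => i; rewrite /del_to_lam ff'; [lia | exact: mod_modulus_bound].
Qed.

End DeltaToLambda.

Lemma del_to_lam_id m : del_to_lam m m id =1 id.
Proof. by move=> i; rewrite /del_to_lam /= Z.add_comm Z.mul_comm -Z.div_mod; lia. Qed.

Lemma del_ishom_id m : del_ishom m m id.
Proof. by split=> [i j|i] /=; lia. Qed.

Lemma over_zero_heq m n (u u' : Z -> Z) :
  lam_heq m n u u' -> over_zero m n u -> over_zero m n u'.
Proof.
move=> uu' u_over; rewrite /over_zero; transitivity (lam_proj n \o u); last exact: u_over.
exact (lam_heq_compl (lam_ishom_proj n) (symmetry uu')).
Qed.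

Lemma over_zero_del_to_lam m n (f : Z -> Z) : del_ishom m n f -> over_zero m n (del_to_lam m n f).
Proof. by move=> f_hom; apply: lam_heq_ext; exact: proj_del_to_lam. Qed.

Lemma over_zero_del_comp X P A (p w : Z -> Z) : del_ishom P A p ->
  over_zero X A (del_to_lam P A p \o w) <-> over_zero X P w.
Proof.
move=> p_hom; have proj_pw : lam_heq X 0 (lam_proj A \o (del_to_lam P A p \o w)) (lam_proj P \o w).
  by apply: lam_heq_ext => i; exact: (proj_del_to_lam p_hom).
by split=> w_over; [rewrite /over_zero -proj_pw | rewrite /over_zero proj_pw].
Qed.

Section Normalize.
Variables (m n : nat) (u : Z -> Z).
Hypotheses (u_hom : lam_ishom m n u) (u_over : over_zero m n u).

Lemma proj_lam_normalize : lam_proj n \o lam_normalize n u =1 lam_proj m.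
Proof.
have [k uk] := u_over.
have u0 : u 0 / modulus n = k by have := uk 0; rewrite /comp /lam_proj Z.div_0_l; lia.
move=> i; have := uk i; rewrite /comp /lam_proj /lam_normalize /shift u0.
by rewrite -Z.mul_opp_l Z.div_add; lia.
Qed.

Lemma del_lift :
  del_ishom m n (lam_normalize n u) /\ lam_heq m n (del_to_lam m n (lam_normalize n u)) u.
Proof.
have q_hom : lam_ishom m n (lam_normalize n u) by apply: lam_ishom_comp (lam_ishom_shift _ _) u_hom.
have [q_mono qN] := q_hom; have q_proj := proj_lam_normalize.
have q_bnd i : 0 <= i <= Z.of_nat m -> 0 <= lam_normalize n u i <= Z.of_nat n.
  move=> i_bnd; have := q_proj i; rewrite /comp /lam_proj [i / _]Z.div_small; last lia.
  have := Z.div_mod (lam_normalize n u i) (modulus n).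
  have := Z.mod_pos_bound (lam_normalize n u i) (modulus n); lia.
split; first by split=> [i j ? ? ?|]; [exact: q_mono | exact: q_bnd].
transitivity (lam_normalize n u).
  apply: lam_heq_ext => i; rewrite /del_to_lam -(equivariant_mul qN).
  by congr lam_normalize; have := Z.div_mod i (modulus m); lia.
by exists (- (u 0 / modulus n)) => i; rewrite /lam_normalize /shift /comp; lia.
Qed.

End Normalize.

Lemma del_lift_factor X P A (p y w : Z -> Z) :
  del_ishom P A p -> del_ishom X A y -> lam_ishom X P w ->
  lam_heq X A (del_to_lam P A p \o w) (del_to_lam X A y) ->
  [/\ del_ishom X P (lam_normalize P w), lam_heq X P (del_to_lam X P (lam_normalize P w)) w
    & del_heq X A (p \o lam_normalize P w) y].
Proof.
move=> p_hom y_hom w_hom pw_y.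
have w_over : over_zero X P w.
  apply/(over_zero_del_comp _ w p_hom).
  exact: over_zero_heq (symmetry pw_y) (over_zero_del_to_lam y_hom).
have [w'_hom w'_w] := del_lift w_hom w_over.
split=> //; apply/del_to_lam_heqE => //; first exact: del_ishom_comp p_hom w'_hom.
rewrite -(lam_heq_ext _ _ (del_to_lam_comp _ p w'_hom)) -pw_y.
exact: lam_heq_compl (del_to_lam_ishom p_hom) w'_w.
Qed.

Lemma lam_hom_to_zero_rotation m (phi : Z -> Z) :
  lam_ishom m 0 phi -> exists r, lam_heq m 0 (phi \o shift r) (lam_proj m).
Proof.
move=> [phi_mono phiN]; have phiN1 i : phi (i + modulus m) = phi i + 1 by rewrite phiN.
(* Rotate to the first jump [r] of [phi] after 0: [phi] is constant on [r, r + m]. *)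
have [r [jump_lo jump_hi]] : exists r, phi (r - 1) <= phi 0 < phi r.
  by apply: (exists_first_jump (t := m.+1)); have := phiN1 0; rewrite Z.add_0_l; lia.
have phi_window j : 0 <= j < modulus m -> phi (j + r) = phi 0 + 1.
  move=> j_bnd; have := phi_mono r (j + r) ltac:(lia).
  have := phi_mono (j + r) (r - 1 + modulus m) ltac:(lia); rewrite phiN1; lia.
exists r, (phi 0 + 1) => i; rewrite /= /shift /lam_proj.
have -> : i + r = (i mod modulus m + r) + i / modulus m * modulus m.
  by have := Z.div_mod i (modulus m); lia.
by rewrite (equivariant_mul phiN1) phi_window; [lia | apply: Z.mod_pos_bound; lia].
Qed.

Lemma over_zero_rotation X A (x : Z -> Z) :
  lam_ishom X A x -> exists r, over_zero X A (x \o shift r).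
Proof. by move=> x_hom; exact: lam_hom_to_zero_rotation (lam_ishom_comp (lam_ishom_proj A) x_hom). Qed.

(** * Delta -> Lambda preserves and reflects pullbacks *)

Lemma del_to_lam_factor X P A (p u y : Z -> Z) :
  del_ishom P A p -> del_ishom X P u -> del_ishom X A y -> del_heq X A (p \o u) y ->
  lam_heq X A (del_to_lam P A p \o del_to_lam X P u) (del_to_lam X A y).
Proof.
move=> p_hom u_hom y_hom pu_y; rewrite (lam_heq_ext _ _ (del_to_lam_comp _ _ u_hom)).
by apply/del_to_lam_heqE => //; exact: del_ishom_comp p_hom u_hom.
Qed.

Lemma lam_factorization_heq P A B X (p1 p2 x1 x2 x1' x2' : Z -> Z) :
  lam_heq X A x1 x1' -> lam_heq X B x2 x2' ->
  @unique_factorization Lam P A B X p1 p2 x1 x2 ->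
  @unique_factorization Lam P A B X p1 p2 x1' x2'.
Proof.
rewrite /unique_factorization /= => e1 e2 [[u [u_hom [u1 u2]]] uniq]; split.
  by exists u; split=> //; split; [rewrite -e1 | rewrite -e2].
by move=> v w v_hom w_hom v1 v2 w1 w2; apply: uniq; rewrite ?e1 ?e2.
Qed.

Lemma lam_factorization_iso P A B X X' (p1 p2 x1 x2 a b : Z -> Z) :
  lam_iso X X' a b -> lam_ishom X' A x1 -> lam_ishom X' B x2 ->
  @unique_factorization Lam P A B X p1 p2 (x1 \o a) (x2 \o a) ->
  @unique_factorization Lam P A B X' p1 p2 x1 x2.
Proof.
rewrite /unique_factorization /= => iso x1_hom x2_hom [[u [u_hom [u1 u2]]] uniq].
have [a_hom b_hom ab _] := iso.
split.
  exists (u \o b); split; first exact: lam_ishom_comp u_hom b_hom.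
  split.
  - transitivity ((x1 \o a) \o b); first exact (lam_heq_compr _ b u1).
    exact (lam_heq_compl x1_hom ab).
  - transitivity ((x2 \o a) \o b); first exact (lam_heq_compr _ b u2).
    exact (lam_heq_compl x2_hom ab).
move=> v w v_hom w_hom v1 v2 w1 w2; apply: (lam_heq_cancel_isor iso v_hom w_hom).
apply: uniq; try exact: lam_ishom_comp a_hom.
- exact (lam_heq_compr _ a v1).
- exact (lam_heq_compr _ a v2).
- exact (lam_heq_compr _ a w1).
- exact (lam_heq_compr _ a w2).
Qed.

Section DeltaPullback.
Variables (P A B D : nat) (p1 p2 f g : Z -> Z).
Hypothesis pb : @is_pullback Del P A B D p1 p2 f g.

Lemma del_to_lam_factorization X (y1 y2 : Z -> Z) :
  del_ishom X A y1 -> del_ishom X B y2 -> del_heq X D (f \o y1) (g \o y2) ->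
  @unique_factorization Lam P A B X (del_to_lam P A p1) (del_to_lam P B p2)
    (del_to_lam X A y1) (del_to_lam X B y2).
Proof.
have /is_pullbackE[[p1_hom p2_hom _ _ _] univ] := pb.
move=> y1_hom y2_hom comm; have [[u [u_hom [u1 u2]]] uniq] := univ X y1 y2 y1_hom y2_hom comm.
split.
  exists (del_to_lam X P u); split; first exact: del_to_lam_ishom.
  by split; exact: del_to_lam_factor.
move=> w v w_hom v_hom w1 w2 v1 v2.
have [w'_hom w'_w w'1] := del_lift_factor p1_hom y1_hom w_hom w1.
have [_ _ w'2] := del_lift_factor p2_hom y2_hom w_hom w2.
have [v'_hom v'_v v'1] := del_lift_factor p1_hom y1_hom v_hom v1.
have [_ _ v'2] := del_lift_factor p2_hom y2_hom v_hom v2.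
rewrite /= -w'_w -v'_v; apply/del_to_lam_heqE => //; exact: uniq.
Qed.

Lemma del_to_lam_factorization_over_zero X (x1 x2 : Z -> Z) :
  lam_ishom X A x1 -> lam_ishom X B x2 -> over_zero X A x1 ->
  lam_heq X D (del_to_lam A D f \o x1) (del_to_lam B D g \o x2) ->
  @unique_factorization Lam P A B X (del_to_lam P A p1) (del_to_lam P B p2) x1 x2.
Proof.
have /is_pullbackE[[_ _ f_hom g_hom _] _] := pb.
move=> x1_hom x2_hom x1_over comm.
have [y1_hom y1_x1] := del_lift x1_hom x1_over.
have gx2_fy1 : lam_heq X D (del_to_lam B D g \o x2) (del_to_lam X D (f \o lam_normalize A x1)).
  rewrite -comm -(lam_heq_ext _ _ (del_to_lam_comp _ _ y1_hom)).
  exact: lam_heq_compl (del_to_lam_ishom f_hom) (symmetry y1_x1).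
have [y2_hom y2_x2 gy2_fy1] := del_lift_factor g_hom (del_ishom_comp f_hom y1_hom) x2_hom gx2_fy1.
apply: lam_factorization_heq y1_x1 y2_x2 _.
by apply: del_to_lam_factorization => // i i_bnd; rewrite gy2_fy1.
Qed.

Lemma del_to_lam_pullback :
  @is_pullback Lam P A B D (del_to_lam P A p1) (del_to_lam P B p2)
    (del_to_lam A D f) (del_to_lam B D g).
Proof.
have /is_pullbackE[[p1_hom p2_hom f_hom g_hom comm] _] := pb.
apply/is_pullbackE; split.
  split; try exact: del_to_lam_ishom.
  have gp2_hom := del_ishom_comp g_hom p2_hom.
  transitivity (del_to_lam P D (g \o p2)).
    exact (del_to_lam_factor f_hom p1_hom gp2_hom comm).
  exact (symmetry (del_to_lam_factor g_hom p2_hom gp2_hom (fun _ _ => erefl))).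
move=> X x1 x2 x1_hom x2_hom.
rewrite /= -/(del_to_lam A D f \o x1) -/(del_to_lam B D g \o x2) => comm'.
(* Rotating the test object moves the cone over <0>, where it lifts to Delta. *)
have [r x1r_over] := over_zero_rotation x1_hom.
apply: (lam_factorization_iso (lam_iso_shift X r)) => //.
apply: del_to_lam_factorization_over_zero => //; try exact: lam_ishom_comp (lam_ishom_shift _ _).
exact (lam_heq_compr _ (shift r) comm').
Qed.

End DeltaPullback.

Lemma del_pullback_of_lam P A B D (p1 p2 f g : Z -> Z) :
  del_ishom P A p1 -> del_ishom P B p2 -> del_ishom A D f -> del_ishom B D g ->
  @is_pullback Lam P A B D (del_to_lam P A p1) (del_to_lam P B p2)
    (del_to_lam A D f) (del_to_lam B D g) ->
  @is_pullback Del P A B D p1 p2 f g.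
Proof.
move=> p1_hom p2_hom f_hom g_hom /is_pullbackE[[_ _ _ _ comm] univ].
apply/is_pullbackE; split.
  split=> //; apply/del_to_lam_heqE;
    [exact: del_ishom_comp f_hom p1_hom | exact: del_ishom_comp g_hom p2_hom |].
  transitivity (del_to_lam A D f \o del_to_lam P A p1).
    exact (symmetry (lam_heq_ext _ _ (del_to_lam_comp _ _ p1_hom))).
  transitivity (del_to_lam B D g \o del_to_lam P B p2); first exact comm.
  exact (lam_heq_ext _ _ (del_to_lam_comp _ _ p2_hom)).
move=> X x1 x2 x1_hom x2_hom comm'.
have gx2_hom := del_ishom_comp g_hom x2_hom.
have lam_comm : lam_heq X D (del_to_lam A D f \o del_to_lam X A x1)
                            (del_to_lam B D g \o del_to_lam X B x2).
  transitivity (del_to_lam X D (g \o x2)); first exact (del_to_lam_factor f_hom x1_hom gx2_hom comm').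
  exact (symmetry (del_to_lam_factor g_hom x2_hom gx2_hom (fun _ _ => erefl))).
have [[u [u_hom [u1 u2]]] uniq] :=
  univ X _ _ (del_to_lam_ishom x1_hom) (del_to_lam_ishom x2_hom) lam_comm.
split.
  have [u'_hom _ u'1] := del_lift_factor p1_hom x1_hom u_hom u1.
  have [_ _ u'2] := del_lift_factor p2_hom x2_hom u_hom u2.
  by exists (lam_normalize P u).
move=> v w v_hom w_hom v1 v2 w1 w2; apply/del_to_lam_heqE => //.
by apply: uniq; try exact: del_to_lam_ishom; exact: del_to_lam_factor.
Qed.

Lemma del_to_lam_pullbackE P A B D (p1 p2 f g : Z -> Z) :
  del_ishom P A p1 -> del_ishom P B p2 -> del_ishom A D f -> del_ishom B D g ->
  @is_pullback Lam P A B D (del_to_lam P A p1) (del_to_lam P B p2)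
    (del_to_lam A D f) (del_to_lam B D g) <-> @is_pullback Del P A B D p1 p2 f g.
Proof.
by move=> p1_hom p2_hom f_hom g_hom; split; [exact: del_pullback_of_lam | exact: del_to_lam_pullback].
Qed.

(** * Cubes *)

Lemma square_subsets (S : finType) (T : {set S}) (s s' : S) :
  [/\ s |: T \subset s |: (s' |: T), s' |: T \subset s |: (s' |: T),
      T \subset s |: T & T \subset s' |: T].
Proof. by split; rewrite ?subsetUr // setUS // subsetUr. Qed.

Section CubeTransfer.
Variables (S : finType) (Q : cube Lam S) (Q' : cube Del S).
Hypotheses (Q_cube : is_cube Q) (Q'_cube : is_cube Q') (iso : nat_iso (lam_image Q') Q).

Lemma square_pullback_transfer (T0 T1 T2 T3 : {set S}) :
  T1 \subset T3 -> T2 \subset T3 -> T0 \subset T1 -> T0 \subset T2 ->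
  @is_pullback Lam _ _ _ _ (cmap Q T1 T3) (cmap Q T2 T3) (cmap Q T0 T1) (cmap Q T0 T2) <->
  @is_pullback Del _ _ _ _ (cmap Q' T1 T3) (cmap Q' T2 T3) (cmap Q' T0 T1) (cmap Q' T0 T2).
Proof.
have [[Q_hom _] [Q'_hom _]] := (Q_cube, Q'_cube); have [a [b iso_ab]] := iso.
have iso_T T : lam_iso (cobj Q' T) (cobj Q T) (a T) (b T).
  by have [? [? [? [? _]]]] := iso_ab T; split.
have nat (T T' : {set S}) : T \subset T' -> lam_heq (cobj Q' T') (cobj Q T)
    (a T \o del_to_lam (cobj Q' T') (cobj Q' T) (cmap Q' T T')) (cmap Q T T' \o a T').
  by move=> sub; have [_ [_ [_ [_ nat]]]] := iso_ab T; exact: nat.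
move=> s13 s23 s01 s02.
rewrite -del_to_lam_pullbackE; try exact: Q'_hom; symmetry.
apply: (lam_pullback_iso_iff (iso_T _) (iso_T _) (iso_T _) (iso_T _) _ _ _ _ _ _ _ _
  (nat _ _ s13) (nat _ _ s23) (nat _ _ s01) (nat _ _ s02)); try exact: Q_hom.
all: exact/del_to_lam_ishom/Q'_hom.
Qed.

Lemma strongly_cartesian_transfer : strongly_cartesian Q <-> strongly_cartesian Q'.
Proof.
by split=> sc T s s' ne sT s'T; have [s13 s23 s01 s02] := square_subsets T s s';
  apply/(square_pullback_transfer s13 s23 s01 s02); exact: sc.
Qed.

End CubeTransfer.

Section CubeLift.
Variables (S : finType) (Q : cube Lam S) (r : {set S} -> Z).
Hypotheses (Q_cube : is_cube Q)
  (r_over : forall T, over_zero (cobj Q T) (cobj Q set0) (cmap Q set0 T \o shift (r T))).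

Definition rotated_map (T T' : {set S}) : Z -> Z := shift (- r T) \o cmap Q T T' \o shift (r T').

Definition lifted_cube : cube Del S :=
  @Cube Del S (cobj Q) (fun T T' => lam_normalize (cobj Q T) (rotated_map T T')).

Lemma rotated_map_ishom (T T' : {set S}) :
  T \subset T' -> lam_ishom (cobj Q T') (cobj Q T) (rotated_map T T').
Proof.
have [Q_hom _] := Q_cube; move=> sub.
exact (lam_ishom_comp (lam_ishom_comp (lam_ishom_shift _ _) (Q_hom _ _ sub)) (lam_ishom_shift _ _)).
Qed.

Lemma rotated_map_comp (T1 T2 T3 : {set S}) : T1 \subset T2 -> T2 \subset T3 ->
  lam_heq (cobj Q T3) (cobj Q T1) (rotated_map T1 T3) (rotated_map T1 T2 \o rotated_map T2 T3).
Proof.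
have [_ [_ Q_comp]] := Q_cube; move=> s12 s23.
have Q_comp13 : lam_heq (cobj Q T3) (cobj Q T1)
    (cmap Q T1 T3) (cmap Q T1 T2 \o cmap Q T2 T3) := Q_comp _ _ _ s12 s23.
transitivity (shift (- r T1) \o (cmap Q T1 T2 \o cmap Q T2 T3) \o shift (r T3)).
  exact (lam_heq_compr _ _ (lam_heq_compl (lam_ishom_shift _ _) Q_comp13)).
by apply: lam_heq_ext => i; rewrite /rotated_map /comp /shift Z.add_opp_r Z.sub_add.
Qed.

Lemma rotated_map_id (T : {set S}) : lam_heq (cobj Q T) (cobj Q T) (rotated_map T T) id.
Proof.
have [_ [Q_id _]] := Q_cube.
have Q_idT : lam_heq (cobj Q T) (cobj Q T) (cmap Q T T) id := Q_id T.
transitivity (shift (- r T) \o id \o shift (r T)).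
  exact (lam_heq_compr _ _ (lam_heq_compl (lam_ishom_shift _ _) Q_idT)).
by apply: lam_heq_ext => i; rewrite /comp /shift; lia.
Qed.

Lemma over_zero_rotated_map (T T' : {set S}) : T \subset T' ->
  over_zero (cobj Q T') (cobj Q T) (rotated_map T T').
Proof.
have [_ [_ Q_comp]] := Q_cube; move=> sub.
have := r_over T'; have := r_over T; rewrite /over_zero => rT rT'.
transitivity ((lam_proj (cobj Q set0) \o (cmap Q set0 T \o shift (r T))) \o rotated_map T T').
  exact (symmetry (lam_heq_compr _ _ rT)).
transitivity (lam_proj (cobj Q set0) \o (cmap Q set0 T \o cmap Q T T') \o shift (r T')).
  by apply: lam_heq_ext => i; rewrite /rotated_map /comp /shift Z.add_opp_r Z.sub_add.
transitivity (lam_proj (cobj Q set0) \o cmap Q set0 T' \o shift (r T')); last exact: rT'.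
have Q_comp0 : lam_heq (cobj Q T') (cobj Q set0)
    (cmap Q set0 T') (cmap Q set0 T \o cmap Q T T') := Q_comp _ _ _ (sub0set T) sub.
exact (lam_heq_compr _ _ (lam_heq_compl (lam_ishom_proj _) (symmetry Q_comp0))).
Qed.

Lemma lifted_map (T T' : {set S}) : T \subset T' ->
  del_ishom (cobj Q T') (cobj Q T) (cmap lifted_cube T T') /\
  lam_heq (cobj Q T') (cobj Q T)
    (del_to_lam (cobj Q T') (cobj Q T) (cmap lifted_cube T T')) (rotated_map T T').
Proof. by move=> sub; apply: del_lift; [exact: rotated_map_ishom | exact: over_zero_rotated_map]. Qed.

Lemma is_cube_lifted_cube : is_cube lifted_cube.
Proof.
split; first by move=> T T' sub; have [] := lifted_map sub.
split=> [T | T1 T2 T3 s12 s23].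
  have [q_hom q_rot] := lifted_map (subxx T).
  apply/(del_to_lam_heqE q_hom (del_ishom_id _)).
  transitivity (rotated_map T T); first exact: q_rot.
  transitivity (@id Z); first exact: rotated_map_id.
  exact (symmetry (lam_heq_ext _ _ (del_to_lam_id _))).
have [q13_hom q13_rot] := lifted_map (subset_trans s12 s23).
have [q12_hom q12_rot] := lifted_map s12; have [q23_hom q23_rot] := lifted_map s23.
apply/(del_to_lam_heqE q13_hom (del_ishom_comp q12_hom q23_hom)).
transitivity (rotated_map T1 T3); first exact: q13_rot.
transitivity (rotated_map T1 T2 \o rotated_map T2 T3); first exact: rotated_map_comp.
transitivity (del_to_lam (cobj Q T2) (cobj Q T1) (cmap lifted_cube T1 T2) \o rotated_map T2 T3).
  exact (symmetry (lam_heq_compr _ _ q12_rot)).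
transitivity (del_to_lam (cobj Q T2) (cobj Q T1) (cmap lifted_cube T1 T2)
              \o del_to_lam (cobj Q T3) (cobj Q T2) (cmap lifted_cube T2 T3)).
  exact (symmetry (lam_heq_compl (del_to_lam_ishom q12_hom) q23_rot)).
exact (lam_heq_ext _ _ (del_to_lam_comp _ _ q23_hom)).
Qed.

Lemma nat_iso_lifted_cube : nat_iso (lam_image lifted_cube) Q.
Proof.
exists (fun T => shift (r T)), (fun T => shift (- r T)) => T.
have [a_hom b_hom ab ba] := lam_iso_shift (cobj Q T) (r T).
do 4 (split; first done).
move=> T' sub; have [_ q_rot] := lifted_map sub.
transitivity (shift (r T) \o rotated_map T T'); first exact: lam_heq_compl (lam_ishom_shift _ _) q_rot.
by apply: lam_heq_ext => i; rewrite /rotated_map /comp /shift /=; lia.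
Qed.

End CubeLift.

Lemma exists_del_lift (S : finType) (Q : cube Lam S) :
  is_cube Q -> exists Q' : cube Del S, is_cube Q' /\ nat_iso (lam_image Q') Q.
Proof.
move=> Q_cube; have [Q_hom _] := Q_cube.
have [r r_over] : exists r : {set S} -> Z,
    forall T, over_zero (cobj Q T) (cobj Q set0) (cmap Q set0 T \o shift (r T)).
  apply: (@choice _ _ (fun T c => over_zero _ _ (cmap Q set0 T \o shift c))) => T.
  exact: over_zero_rotation (Q_hom _ _ (sub0set T)).
exists (lifted_cube Q r); split; [exact: is_cube_lifted_cube | exact: nat_iso_lifted_cube].
Qed.

Theorem lemma4p2p7 (S : finType) (Q : cube Lam S) :
  is_cube Q ->
  (strongly_cartesian Q <->
     exists Q' : cube Del S,
       is_cube Q' /\ nat_iso (lam_image Q') Q /\ strongly_cartesian Q') /\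
  (strongly_cartesian Q <->
     forall Q' : cube Del S,
       is_cube Q' -> nat_iso (lam_image Q') Q -> strongly_cartesian Q').
Proof.
move=> Q_cube; have [Q0 [Q0_cube Q0_iso]] := exists_del_lift Q_cube.
have transfer := strongly_cartesian_transfer Q_cube.
split; split.
- by move=> sc; exists Q0; do 2 (split=> //); apply/(transfer _ Q0_cube Q0_iso).
- by case=> Q' [Q'_cube [Q'_iso sc']]; apply/(transfer _ Q'_cube Q'_iso).
- by move=> sc Q' Q'_cube Q'_iso; apply/(transfer _ Q'_cube Q'_iso).
- by move=> all_sc; apply/(transfer _ Q0_cube Q0_iso)/all_sc.
Qed.
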